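(* Let $(X,d)$ be a compact metric space and $f:X\to X$ continuous. Suppose (1) there is $(z,w)\in CR(f)^2$ with $z\sim w$ and such that $(z,w)$ has property*; and (2) for every sequence $(x_i)_{i\ge0}$ of points of $CR(f)$ with $\lim_{i\to\infty}d(f(x_i),x_{i+1})=0$ there is $x\in X$ with $\lim_{n\to\infty}\frac1n\sum_{i=0}^{n-1}d(f^i(x),x_i)=0$. Then $f$ exhibits DC1.
   Context: A $\delta$-chain of $f$ is a finite sequence $(x_i)_{i=0}^k$, $k\ge1$, with $d(f(x_i),x_{i+1})\le\delta$ for $0\le i<k$; a $\delta$-cycle is a $\delta$-chain with $x_0=x_k$. $CR(f)$ is the set of points $x$ such that for every $\delta>0$ there is a $\delta$-cycle starting and ending at $x$. For $x,y\in CR(f)$, $x\sim y$ iff for every $\delta>0$ there are integers $m>0$, $N>0$ such that for every $n\ge N$ there are $\delta$-chains $(x_i)_{i=0}^{mn},(y_i)_{i=0}^{mn}$ in $CR(f)$ with $x_0=y_{mn}=x$, $x_{mn}=y_0=y$. A pair $(x,y)\in CR(f)^2$ has property* if there is $r>0$ such that for every $\delta>0$ there are $\delta$-cycles $(x_i)_{i=0}^k,(y_i)_{i=0}^k$ of $f$ in $CR(f)$ (same length $k$) with $x_0=x_k=x$, $y_0=y_k=y$ and $d(x_i,y_i)>r$ for all $0\le i\le k$. A pair $(x,y)$ is a DC1-pair if $\limsup_{n}\frac1n|\{0\le i<n: d(f^i(x),f^i(y))<\delta\}|=1$ for all $\delta>0$ and $\limsup_{n}\frac1n|\{0\le i<n: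 d(f^i(x),f^i(y))>\delta_0\}|=1$ for some $\delta_0>0$; $f$ exhibits DC1 if there is an uncountable $S\subset X$ any two distinct points of which form a DC1-pair. *)

From Stdlib Require Import Reals Lra List.
Open Scope R_scope.

Definition is_metric {X : Type} (d : X -> X -> R) : Prop :=
  (forall x y, 0 <= d x y) /\
  (forall x y, d x y = 0 <-> x = y) /\
  (forall x y, d x y = d y x) /\
  (forall x y z, d x z <= d x y + d y z).

Definition is_open {X : Type} (d : X -> X -> R) (U : X -> Prop) : Prop :=
  forall x, U x -> exists eps, 0 < eps /\ forall y, d x y < eps -> U y.

Definition compact_space {X : Type} (d : X -> X -> R) : Prop :=
  forall (I : Type) (U : I -> X -> Prop),
    (forall i, is_open d (U i)) ->
    (forall x, exists i, U i x) ->
    exists l : list I, forall x, exists i, In i l /\ U i x.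

Definition continuous_map {X : Type} (d : X -> X -> R) (f : X -> X) : Prop :=
  forall x eps, 0 < eps ->
    exists delta, 0 < delta /\ forall y, d x y < delta -> d (f x) (f y) < eps.

Fixpoint iter {X : Type} (f : X -> X) (n : nat) (x : X) : X :=
  match n with O => x | S n' => f (iter f n' x) end.

Definition is_chain {X : Type} (d : X -> X -> R) (f : X -> X) (delta : R)
  (xs : nat -> X) (k : nat) : Prop :=
  (1 <= k)%nat /\ forall i, (i < k)%nat -> d (f (xs i)) (xs (S i)) <= delta.

Definition CR {X : Type} (d : X -> X -> R) (f : X -> X) (x : X) : Prop :=
  forall delta, 0 < delta ->
    exists (xs : nat -> X) (k : nat),
      is_chain d f delta xs k /\ xs O = x /\ xs k = x.

Definition chain_in_CR {X : Type} (d : X -> X -> R) (f : X -> X)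
  (xs : nat -> X) (k : nat) : Prop :=
  forall i, (i <= k)%nat -> CR d f (xs i).

Definition CR_sim {X : Type} (d : X -> X -> R) (f : X -> X) (x y : X) : Prop :=
  forall delta, 0 < delta ->
    exists m N : nat, (0 < m)%nat /\ (0 < N)%nat /\
      forall n, (N <= n)%nat ->
        exists xs ys : nat -> X,
          is_chain d f delta xs (m * n) /\ chain_in_CR d f xs (m * n) /\
          is_chain d f delta ys (m * n) /\ chain_in_CR d f ys (m * n) /\
          xs O = x /\ ys (m * n)%nat = x /\ xs (m * n)%nat = y /\ ys O = y.

Definition property_star {X : Type} (d : X -> X -> R) (f : X -> X) (x y : X) : Prop :=
  exists r, 0 < r /\
    forall delta, 0 < delta ->
      exists (xs ys : nat -> X) (k : nat),
        is_chain d f delta xs k /\ chain_in_CR d f xs k /\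
        is_chain d f delta ys k /\ chain_in_CR d f ys k /\
        xs O = x /\ xs k = x /\ ys O = y /\ ys k = y /\
        forall i, (i <= k)%nat -> d (xs i) (ys i) > r.

Fixpoint sum_lt (u : nat -> R) (n : nat) : R :=
  match n with O => 0 | S n' => sum_lt u n' + u n' end.

Definition count_lt (P : nat -> Prop) (Pdec : forall i, {P i} + {~ P i}) (n : nat) : R :=
  sum_lt (fun i => if Pdec i then 1 else 0) n.

Definition limsup_eq (u : nat -> R) (L : R) : Prop :=
  (forall eps, 0 < eps -> forall N, exists n, (N <= n)%nat /\ L - eps < u n) /\
  (forall eps, 0 < eps -> exists N, forall n, (N <= n)%nat -> u n < L + eps).

Definition DC1_pair {X : Type} (d : X -> X -> R) (f : X -> X) (x y : X) : Prop :=
  (forall delta, 0 < delta ->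
     limsup_eq (fun n =>
       count_lt (fun i => d (iter f i x) (iter f i y) < delta)
                (fun i => Rlt_dec (d (iter f i x) (iter f i y)) delta) n / INR n) 1) /\
  (exists delta0, 0 < delta0 /\
     limsup_eq (fun n =>
       count_lt (fun i => d (iter f i x) (iter f i y) > delta0)
                (fun i => Rgt_dec (d (iter f i x) (iter f i y)) delta0) n / INR n) 1).

Definition countable_set {X : Type} (S : X -> Prop) : Prop :=
  exists h : X -> nat, forall x y, S x -> S y -> h x = h y -> x = y.

Definition exhibits_DC1 {X : Type} (d : X -> X -> R) (f : X -> X) : Prop :=
  exists S : X -> Prop, ~ countable_set S /\
    forall x y, S x -> S y -> x <> y -> DC1_pair d f x y.

(* Let (z, w) be the pair of hypothesis (1) and r its separation constant.  For
   every m we build, from a pair of 1/(m+1)-cycles at z and w that stay r apart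
   (property* ) and from transitions z -> w -> z of two synchronised lengths L
   and 2L (given by z ~ w), two 1/(m+1)-chains U_m, V_m from z to z of the same
   length: they coincide on a very long initial segment, then stay r apart on a
   very long segment.  Gluing the stages m = 0, 1, 2, ... and choosing U_m or
   V_m according to the bit s(visit m) of a binary sequence s (visit hits every
   index infinitely often) gives a pseudo-orbit x^s in CR(f) with vanishing
   errors.  Hypothesis (2) yields a point p(s) shadowing x^s in Cesaro mean.
   For s <> s' the pseudo-orbits agree, resp. are r apart, on windows [K, n)
   with K/n arbitrarily small, which by a density count makes (p s, p s') a
   DC1-pair; Cantor's diagonal argument makes {p s} uncountable. *)

From Stdlib Require Import Reals Lra Lia Classical FunctionalExtensionality IndefiniteDescription.
Open Scope R_scope.

Lemma sum_lt_nonneg (u : nat -> R) (n : nat) :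
  (forall i, 0 <= u i) -> 0 <= sum_lt u n.
Proof. intro Hu. induction n as [|n IH]; simpl; [lra|]. specialize (Hu n). lra. Qed.

Lemma sum_lt_plus (u v : nat -> R) (n : nat) :
  sum_lt (fun i => u i + v i) n = sum_lt u n + sum_lt v n.
Proof. induction n as [|n IH]; simpl; [lra|]. rewrite IH. ring. Qed.

Lemma div_nonneg (a t : R) : 0 <= a -> 0 < t -> 0 <= a / t.
Proof. intros. unfold Rdiv. apply Rmult_le_pos; [|left; apply Rinv_0_lt_compat]; lra. Qed.

Lemma count_lt_bounds (P : nat -> Prop) (Pd : forall i, {P i} + {~ P i}) (n : nat) :
  0 <= count_lt P Pd n <= INR n.
Proof.
  induction n as [|n IH]; unfold count_lt in *; simpl sum_lt; [simpl; lra|].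
  rewrite S_INR. destruct (Pd n); lra.
Qed.

Lemma count_lt_none (P : nat -> Prop) (Pd : forall i, {P i} + {~ P i}) (n : nat) :
  (forall i, ~ P i) -> count_lt P Pd n = 0.
Proof.
  intro HP. induction n as [|n IH]; unfold count_lt in *; simpl sum_lt; [reflexivity|].
  rewrite IH. destruct (Pd n) as [p|]; [destruct (HP n p)|lra].
Qed.

(* Markov-type count: if c i < t forces P i for K <= i < n, then all but
   K + (sum of c)/t of the first n indices satisfy P. *)
Lemma count_lower (P : nat -> Prop) (Pd : forall i, {P i} + {~ P i})
    (c : nat -> R) (t : R) (K n : nat) :
  0 < t -> (forall i, 0 <= c i) ->
  (forall i, (K <= i)%nat -> (i < n)%nat -> c i < t -> P i) ->
  INR n - INR K - sum_lt c n / t <= count_lt P Pd n.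
Proof.
  intros Ht Hc. induction n as [|n IH]; intro HP.
  - unfold count_lt. simpl. pose proof (pos_INR K). unfold Rdiv. lra.
  - specialize (IH (fun i h1 h2 => HP i h1 (Nat.lt_lt_succ_r _ _ h2))).
    assert (Hsum : sum_lt c (S n) / t = sum_lt c n / t + c n / t)
      by (simpl; field; lra).
    assert (Hcn : 0 <= c n / t) by (apply div_nonneg; [apply Hc|lra]).
    rewrite Hsum. unfold count_lt in *. simpl sum_lt. rewrite S_INR.
    destruct (Nat.le_gt_cases K n) as [HK|HK].
    + destruct (Rlt_dec (c n) t) as [Hlt|Hge].
      * destruct (Pd n) as [_|nP]; [lra|destruct (nP (HP n HK (Nat.lt_succ_diag_r n) Hlt))].
      * assert (1 <= c n / t).
        { apply Rmult_le_reg_r with t; [lra|]. unfold Rdiv.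
          rewrite Rmult_assoc, Rinv_l by lra. lra. }
        destruct (Pd n); lra.
    + assert (INR n + 1 <= INR K) by (rewrite <- S_INR; apply le_INR; lia).
      assert (0 <= sum_lt c n / t)
        by (apply div_nonneg; [apply sum_lt_nonneg; exact Hc|lra]).
      pose proof (count_lt_bounds P Pd n) as Hb. unfold count_lt in Hb.
      destruct (Pd n); lra.
Qed.

Definition long_windows (Q : nat -> Prop) : Prop :=
  forall eps, 0 < eps -> forall N, exists K n, (N <= n)%nat /\ INR K <= eps * INR n /\
    forall i, (K <= i)%nat -> (i < n)%nat -> Q i.

Lemma long_windows_impl (Q Q' : nat -> Prop) :
  (forall i, Q i -> Q' i) -> long_windows Q -> long_windows Q'.
Proof.
  intros HQ HW eps He N. destruct (HW eps He N) as [K [n [Hn [HK Hi]]]].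
  exists K, n. repeat split; auto.
Qed.

Definition cesaro_null (u : nat -> R) : Prop := Un_cv (fun n => sum_lt u n / INR n) 0.

Lemma cesaro_null_plus (u v : nat -> R) :
  cesaro_null u -> cesaro_null v -> cesaro_null (fun i => u i + v i).
Proof.
  intros Hu Hv. unfold cesaro_null. rewrite <- (Rplus_0_l 0).
  apply Un_cv_ext with (fun n => sum_lt u n / INR n + sum_lt v n / INR n).
  - intro n. rewrite sum_lt_plus. unfold Rdiv. ring.
  - now apply CV_plus.
Qed.

Lemma density_limsup_one (P : nat -> Prop) (Pd : forall i, {P i} + {~ P i})
    (c : nat -> R) (t : R) :
  0 < t -> (forall i, 0 <= c i) -> cesaro_null c ->
  long_windows (fun i => c i < t -> P i) ->
  limsup_eq (fun n => count_lt P Pd n / INR n) 1.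
Proof.
  intros Ht Hc Hcn HW. split.
  - intros eps He N.
    destruct (Hcn (eps * t / 2)) as [N1 HN1].
    { apply Rlt_gt, Rdiv_lt_0_compat; [apply Rmult_lt_0_compat|]; lra. }
    destruct (HW (eps / 2) ltac:(lra) (N + N1 + 1)%nat) as [K [n [Hn [HK Hi]]]].
    exists n. split; [lia|].
    assert (Hn0 : 0 < INR n) by (apply lt_0_INR; lia).
    assert (Hsmall : sum_lt c n / t < eps / 2 * INR n).
    { specialize (HN1 n ltac:(lia)). unfold Rdist in HN1. rewrite Rminus_0_r in HN1.
      apply Rabs_def2 in HN1. destruct HN1 as [HN1 _].
      apply Rmult_lt_compat_r with (r := INR n / t) in HN1;
        [|apply Rdiv_lt_0_compat; lra].
      replace (sum_lt c n / INR n * (INR n / t)) with (sum_lt c n / t) in HN1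
        by (field; lra).
      replace (eps * t / 2 * (INR n / t)) with (eps / 2 * INR n) in HN1 by (field; lra).
      exact HN1. }
    pose proof (count_lower P Pd c t K n Ht Hc Hi) as Hlow.
    apply Rmult_lt_reg_r with (INR n); [exact Hn0|].
    unfold Rdiv. rewrite Rmult_assoc, Rinv_l by lra. nra.
  - intros eps He. exists 1%nat. intros n Hn.
    assert (Hn0 : 0 < INR n) by (apply lt_0_INR; lia).
    pose proof (count_lt_bounds P Pd n) as Hb.
    assert (count_lt P Pd n / INR n <= 1).
    { apply Rmult_le_reg_r with (INR n); [lra|]. unfold Rdiv.
      rewrite Rmult_assoc, Rinv_l by lra. lra. }
    lra.
Qed.

Lemma DC1_pair_of_shadowing {X : Type} (d : X -> X -> R) (f : X -> X)
    (xs ys : nat -> X) (x y : X) (r : R) :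
  is_metric d -> 0 < r ->
  cesaro_null (fun i => d (iter f i x) (xs i)) ->
  cesaro_null (fun i => d (iter f i y) (ys i)) ->
  long_windows (fun i => xs i = ys i) ->
  long_windows (fun i => d (xs i) (ys i) > r) ->
  DC1_pair d f x y.
Proof.
  intros [Hpos [_ [Hsym Htri]]] Hr Hx Hy Hagree Hfar.
  set (c := fun i => d (iter f i x) (xs i) + d (iter f i y) (ys i)).
  assert (Hc : forall i, 0 <= c i)
    by (intro i; unfold c; pose proof (Hpos (iter f i x) (xs i));
        pose proof (Hpos (iter f i y) (ys i)); lra).
  assert (Hcn : cesaro_null c) by (apply cesaro_null_plus; assumption).
  split.
  - intros delta Hd. apply (density_limsup_one _ _ c delta Hd Hc Hcn).
    apply (long_windows_impl _ _) with (2 := Hagree); intros i Hi Hci.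
    unfold c in Hci. rewrite Hi in Hci.
    pose proof (Htri (iter f i x) (ys i) (iter f i y)) as T.
    rewrite (Hsym (ys i)) in T. lra.
  - exists (r / 2). split; [lra|].
    apply (density_limsup_one _ _ c (r / 2) ltac:(lra) Hc Hcn).
    apply (long_windows_impl _ _) with (2 := Hfar); intros i Hi Hci.
    unfold c in Hci.
    pose proof (Htri (xs i) (iter f i x) (ys i)) as T1.
    pose proof (Htri (iter f i x) (iter f i y) (ys i)) as T2.
    rewrite (Hsym (xs i) (iter f i x)) in T1. cbv beta in Hi. lra.
Qed.

Lemma DC1_pair_distinct {X : Type} (d : X -> X -> R) (f : X -> X) (x y : X) :
  is_metric d -> DC1_pair d f x y -> x <> y.
Proof.
  intros [_ [Hid _]] [_ [d0 [Hd0 [Hl _]]]] Exy. subst y.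
  destruct (Hl (1 / 2) ltac:(lra) 0%nat) as [n [_ Hn]].
  rewrite count_lt_none in Hn.
  - unfold Rdiv in Hn. rewrite Rmult_0_l in Hn. lra.
  - intro i. rewrite (proj2 (Hid _ _) eq_refl). lra.
Qed.

Definition CR_chain {X : Type} (d : X -> X -> R) (f : X -> X) (delta : R)
    (g : nat -> X) (L : nat) (a b : X) : Prop :=
  g O = a /\ g L = b /\
  (forall i, (i < L)%nat -> d (f (g i)) (g (S i)) <= delta) /\
  (forall i, (i <= L)%nat -> CR d f (g i)).

Lemma CR_chain_of_chain {X : Type} (d : X -> X -> R) (f : X -> X) (delta : R)
    (g : nat -> X) (L : nat) (a b : X) :
  is_chain d f delta g L -> chain_in_CR d f g L -> g O = a -> g L = b ->
  CR_chain d f delta g L a b.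
Proof. intros [_ Hstep] Hin Ha Hb. repeat split; auto. Qed.

Definition cat {X : Type} (g1 : nat -> X) (L1 : nat) (g2 : nat -> X) : nat -> X :=
  fun i => if Nat.ltb i L1 then g1 i else g2 (i - L1)%nat.

Lemma cat_lt {X : Type} (g1 g2 : nat -> X) (L1 i : nat) :
  (i < L1)%nat -> cat g1 L1 g2 i = g1 i.
Proof. intro h. unfold cat. apply Nat.ltb_lt in h. now rewrite h. Qed.

Lemma cat_ge {X : Type} (g1 g2 : nat -> X) (L1 i : nat) :
  (L1 <= i)%nat -> cat g1 L1 g2 i = g2 (i - L1)%nat.
Proof. intro h. unfold cat. apply Nat.ltb_ge in h. now rewrite h. Qed.

Lemma CR_chain_cat {X : Type} (d : X -> X -> R) (f : X -> X) (delta : R)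
    (g1 g2 : nat -> X) (L1 L2 : nat) (a b c : X) :
  CR_chain d f delta g1 L1 a b -> CR_chain d f delta g2 L2 b c ->
  CR_chain d f delta (cat g1 L1 g2) (L1 + L2) a c.
Proof.
  intros [A1 [B1 [C1 D1]]] [A2 [B2 [C2 D2]]].
  assert (Hjoin : cat g1 L1 g2 L1 = g1 L1)
    by (rewrite cat_ge, Nat.sub_diag by lia; congruence).
  repeat split.
  - destruct (Nat.eq_dec L1 0) as [->|HL1].
    + rewrite Hjoin. exact A1.
    + rewrite cat_lt by lia. exact A1.
  - rewrite cat_ge by lia. replace (L1 + L2 - L1)%nat with L2 by lia. exact B2.
  - intros i hi. destruct (Nat.lt_ge_cases (S i) L1) as [h|h].
    + rewrite !cat_lt by lia. apply C1; lia.
    + destruct (Nat.lt_ge_cases i L1) as [h'|h'].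
      * assert (E : S i = L1) by lia. rewrite E, Hjoin, cat_lt, <- E by lia. apply C1; lia.
      * rewrite !cat_ge by lia. replace (S i - L1)%nat with (S (i - L1)) by lia.
        apply C2; lia.
  - intros i hi. destruct (Nat.lt_ge_cases i L1) as [h|h].
    + rewrite cat_lt by lia. apply D1; lia.
    + rewrite cat_ge by lia. apply D2; lia.
Qed.

Definition rep {X : Type} (g : nat -> X) (k : nat) : nat -> X := fun i => g (i mod k)%nat.

Lemma CR_chain_rep {X : Type} (d : X -> X -> R) (f : X -> X) (delta : R)
    (g : nat -> X) (k T : nat) (z : X) :
  (1 <= k)%nat -> CR_chain d f delta g k z z -> CR_chain d f delta (rep g k) (k * T) z z.
Proof.
  intros hk [A [B [C D]]]. unfold rep. repeat split.
  - rewrite Nat.Div0.mod_0_l. exact A.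
  - rewrite Nat.mul_comm, Nat.Div0.mod_mul. exact A.
  - intros i _. pose proof (Nat.mod_upper_bound i k ltac:(lia)).
    pose proof (Nat.div_mod i k ltac:(lia)).
    destruct (Nat.lt_ge_cases (S (i mod k)) k) as [h|h].
    + replace (S i mod k)%nat with (S (i mod k)).
      * apply C; lia.
      * apply (Nat.mod_unique _ _ (i / k)); lia.
    + replace (S i mod k)%nat with O.
      * rewrite A, <- B. replace k with (S (i mod k)) at 2 by lia. apply C; lia.
      * apply (Nat.mod_unique _ _ (S (i / k))); nia.
  - intros i _. apply D. pose proof (Nat.mod_upper_bound i k ltac:(lia)). lia.
Qed.

Definition separated_cycles {X : Type} (d : X -> X -> R) (f : X -> X) (r : R) (x y : X) : Prop :=
  forall delta, 0 < delta ->
    exists (xs ys : nat -> X) (k : nat),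
      is_chain d f delta xs k /\ chain_in_CR d f xs k /\
      is_chain d f delta ys k /\ chain_in_CR d f ys k /\
      xs O = x /\ xs k = x /\ ys O = y /\ ys k = y /\
      forall i, (i <= k)%nat -> d (xs i) (ys i) > r.

Lemma CR_sim_transitions {X : Type} (d : X -> X -> R) (f : X -> X) (z w : X) (delta : R) :
  CR_sim d f z w -> 0 < delta ->
  exists (L : nat) (Z1 W1 Z2 W2 : nat -> X),
    CR_chain d f delta Z1 L z w /\ CR_chain d f delta W1 L w z /\
    CR_chain d f delta Z2 (L + L) z w /\ CR_chain d f delta W2 (L + L) w z.
Proof.
  intros Hsim Hd. destruct (Hsim delta Hd) as [c [N [Hc [HN Hch]]]].
  destruct (Hch N (le_n _)) as [Z1 [W1 [HZ1 [HZ1c [HW1 [HW1c [Z10 [W1L [Z1L W10]]]]]]]]].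
  destruct (Hch (2 * N)%nat ltac:(lia))
    as [Z2 [W2 [HZ2 [HZ2c [HW2 [HW2c [Z20 [W2L [Z2L W20]]]]]]]]].
  replace (c * (2 * N))%nat with (c * N + c * N)%nat in * by lia.
  exists (c * N)%nat, Z1, W1, Z2, W2.
  split; [|split; [|split]]; apply CR_chain_of_chain; assumption.
Qed.

Lemma separated_cycles_spec {X : Type} (d : X -> X -> R) (f : X -> X) (r : R) (x y : X)
    (delta : R) :
  separated_cycles d f r x y -> 0 < delta ->
  exists (k : nat) (P Q : nat -> X), (1 <= k)%nat /\
    CR_chain d f delta P k x x /\ CR_chain d f delta Q k y y /\
    forall i, (i < k)%nat -> d (P i) (Q i) > r.
Proof.
  intros Hsep Hd.
  destruct (Hsep delta Hd) as [P [Q [k [HP [HPc [HQ [HQc [P0 [Pk [Q0 [Qk Hfar]]]]]]]]]]].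
  exists k, P, Q. split; [apply HP|]. split; [|split].
  - apply CR_chain_of_chain; assumption.
  - apply CR_chain_of_chain; assumption.
  - intros i hi. apply Hfar. lia.
Qed.

(* One stage of the construction: two blocks U, V with common length st_len,
   equal below st_agree and r apart on [st_far_start, st_far_end). *)
Record Stage (X : Type) := mkStage {
  stU : nat -> X;
  stV : nat -> X;
  st_agree : nat;
  st_far_start : nat;
  st_far_end : nat;
  st_len : nat }.
Arguments mkStage {X}. Arguments stU {X}. Arguments stV {X}. Arguments st_agree {X}.
Arguments st_far_start {X}. Arguments st_far_end {X}. Arguments st_len {X}.

(* Requirements on the m-th stage when it is placed at position p: both
   blocks are 1/(m+1)-chains in CR(f) from z to z, and the prefix p is at most
   a 1/(m+1) proportion of the end of the agreement and of the far window. *)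
Definition stage_ok {X : Type} (d : X -> X -> R) (f : X -> X) (z : X) (r : R)
    (m p : nat) (D : Stage X) : Prop :=
  CR_chain d f (/ INR (S m)) (stU D) (st_len D) z z /\
  CR_chain d f (/ INR (S m)) (stV D) (st_len D) z z /\
  (1 <= st_agree D <= st_far_start D)%nat /\
  (st_far_start D <= st_far_end D <= st_len D)%nat /\
  (S m * p <= p + st_agree D)%nat /\
  (S m * (p + st_far_start D) <= p + st_far_end D)%nat /\
  (forall i, (i < st_agree D)%nat -> stU D i = stV D i) /\
  (forall i, (st_far_start D <= i < st_far_end D)%nat -> d (stU D i) (stV D i) > r).

(* Stages exist: U = P^a Z1 W1 P^T Z1 W1 and V = P^a Z2 Q^T W2, where P, Q
   are the separated cycles at z, w and Z1 W1, Z2, W2 the transitions; the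
   exponents a and T are taken large compared with the position p. *)
Lemma stage_exists {X : Type} (d : X -> X -> R) (f : X -> X) (z w : X) (r : R) (m p : nat) :
  CR_sim d f z w -> separated_cycles d f r z w -> exists D, stage_ok d f z r m p D.
Proof.
  intros Hsim Hsep. set (dl := / INR (S m)).
  assert (Hdl : 0 < dl) by (apply Rinv_0_lt_compat, lt_0_INR; lia).
  destruct (separated_cycles_spec d f r z w dl Hsep Hdl) as [k [P [Q [Hk [HP [HQ Hfar]]]]]].
  destruct (CR_sim_transitions d f z w dl Hsim Hdl)
    as [L [Z1 [W1 [Z2 [W2 [HZ1 [HW1 [HZ2 HW2]]]]]]]].
  set (a := (k * (S m * p + 1))%nat).
  set (b := (a + (L + L))%nat).
  set (T := (S m * (p + b) + 1)%nat).
  assert (HPa : CR_chain d f dl (rep P k) a z z) by (apply CR_chain_rep; assumption).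
  assert (HPT : CR_chain d f dl (rep P k) (k * T) z z) by (apply CR_chain_rep; assumption).
  assert (HQT : CR_chain d f dl (rep Q k) (k * T) w w) by (apply CR_chain_rep; assumption).
  exists (mkStage (cat (rep P k) a (cat Z1 L (cat W1 L (cat (rep P k) (k * T) (cat Z1 L W1)))))
             (cat (rep P k) a (cat Z2 (L + L) (cat (rep Q k) (k * T) W2)))
             a b (b + k * T) (b + k * T + (L + L))).
  unfold stage_ok; simpl. split; [|split].
  - replace (b + k * T + (L + L))%nat with (a + (L + (L + (k * T + (L + L)))))%nat by lia.
    apply CR_chain_cat with z; [exact HPa|]. apply CR_chain_cat with w; [exact HZ1|].
    apply CR_chain_cat with z; [exact HW1|]. apply CR_chain_cat with z; [exact HPT|].
    apply CR_chain_cat with w; assumption.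
  - replace (b + k * T + (L + L))%nat with (a + ((L + L) + (k * T + (L + L))))%nat by lia.
    apply CR_chain_cat with z; [exact HPa|]. apply CR_chain_cat with w; [exact HZ2|].
    apply CR_chain_cat with w; assumption.
  - repeat split; try (unfold b, T; nia).
    + intros i hi. rewrite !cat_lt by lia. reflexivity.
    + intros i [h1 h2].
      rewrite (cat_ge (rep P k)), (cat_ge Z1), (cat_ge W1), cat_lt by (unfold b in *; lia).
      rewrite (cat_ge (rep P k)), (cat_ge Z2), cat_lt by (unfold b in *; lia).
      replace (i - a - (L + L))%nat with (i - a - L - L)%nat by lia.
      unfold rep. apply Hfar, Nat.mod_upper_bound. lia.
Qed.

(* Gluing infinitely many blocks; the m-th block has length len m p when it
   starts at position p, so later blocks may depend on where they start. *)
Section Gluing.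

Variable len : nat -> nat -> nat.
Hypothesis len_pos : forall m p, (1 <= len m p)%nat.

Fixpoint start (m : nat) : nat :=
  match m with O => O | S m' => (start m' + len m' (start m'))%nat end.

Fixpoint block_index (i : nat) : nat :=
  match i with
  | O => O
  | S i' => let m := block_index i' in if Nat.leb (start (S m)) (S i') then S m else m
  end.

Lemma start_grows (m m' : nat) : (m <= m')%nat -> (start m + (m' - m) <= start m')%nat.
Proof.
  intro h. induction h as [|m' h IH]; [lia|].
  cbn [start]. specialize (len_pos m' (start m')). lia.
Qed.

Lemma block_index_spec (i : nat) : (start (block_index i) <= i < start (S (block_index i)))%nat.
Proof.
  induction i as [|i IH].
  - simpl. specialize (len_pos O O). lia.
  - change (block_index (S i)) with
      (if Nat.leb (start (S (block_index i))) (S i) then S (block_index i) else block_index i).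
    destruct (Nat.leb (start (S (block_index i))) (S i)) eqn:E.
    + apply Nat.leb_le in E. split; [exact E|].
      change (start (S (S (block_index i))))
        with (start (S (block_index i)) + len (S (block_index i)) (start (S (block_index i))))%nat.
      specialize (len_pos (S (block_index i)) (start (S (block_index i)))). lia.
    + apply Nat.leb_gt in E. lia.
Qed.

Lemma block_index_unique (m i : nat) :
  (start m <= i < start (S m))%nat -> block_index i = m.
Proof.
  intro h. pose proof (block_index_spec i) as hs.
  destruct (Nat.lt_total (block_index i) m) as [l|[e|l]]; [|exact e|].
  - pose proof (start_grows (S (block_index i)) m l). lia.
  - pose proof (start_grows (S m) (block_index i) l). lia.
Qed.

Lemma block_index_large (M i : nat) : (start M <= i)%nat -> (M <= block_index i)%nat.
Proof.
  intro h. pose proof (block_index_spec i) as hs.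
  destruct (Nat.le_gt_cases M (block_index i)) as [l|l]; [exact l|].
  pose proof (start_grows (S (block_index i)) M l). lia.
Qed.

Context {X : Type}.
Variable blk : nat -> nat -> X.

Definition glue (i : nat) : X := blk (block_index i) (i - start (block_index i)).

Lemma glue_in (m i : nat) :
  (start m <= i < start (S m))%nat -> glue i = blk m (i - start m).
Proof. intro h. unfold glue. now rewrite (block_index_unique m i h). Qed.

Variable d : X -> X -> R.
Variable f : X -> X.
Variable z : X.
Variable delta : nat -> R.
Hypothesis blk_chain : forall m, CR_chain d f (delta m) (blk m) (len m (start m)) z z.

Lemma glue_CR (i : nat) : CR d f (glue i).
Proof.
  pose proof (block_index_spec i) as hs. destruct (blk_chain (block_index i)) as [_ [_ [_ D]]].
  apply D. simpl in hs. lia.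
Qed.

Lemma glue_step (i : nat) : d (f (glue i)) (glue (S i)) <= delta (block_index i).
Proof.
  pose proof (block_index_spec i) as hs. set (m := block_index i) in *.
  assert (Hsm : start (S m) = (start m + len m (start m))%nat) by reflexivity.
  destruct (blk_chain m) as [_ [Bend [Hstep _]]].
  destruct (Nat.lt_ge_cases (S i) (start (S m))) as [h|h].
  - rewrite (glue_in m (S i)) by lia. unfold glue; fold m.
    replace (S i - start m)%nat with (S (i - start m)) by lia. apply Hstep. lia.
  - assert (E : S i = start (S m)) by lia.
    destruct (blk_chain (S m)) as [Bstart _].
    assert (Hsm' : start (S (S m)) = (start (S m) + len (S m) (start (S m)))%nat)
      by reflexivity.
    rewrite E, (glue_in (S m) (start (S m))) by (specialize (len_pos (S m) (start (S m))); lia).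
    rewrite Nat.sub_diag, Bstart, <- Bend. unfold glue; fold m.
    replace (len m (start m)) with (S (i - start m)) by lia. apply Hstep. lia.
Qed.

End Gluing.

Lemma inv_succ_small (eps : R) :
  0 < eps -> exists M, forall m, (M <= m)%nat -> / INR (S m) < eps.
Proof.
  intro He. destruct (archimed_cor1 eps He) as [M [HM HM0]]. exists M. intros m hm.
  eapply Rle_lt_trans; [|exact HM].
  apply Rinv_le_contravar; [apply lt_0_INR; lia|]. apply le_INR. lia.
Qed.

Lemma small_prefix (K n m : nat) (eps : R) :
  (S m * K <= n)%nat -> / INR (S m) <= eps -> INR K <= eps * INR n.
Proof.
  intros hK He. assert (Hm : 0 < INR (S m)) by (apply lt_0_INR; lia).
  assert (Hn : INR (S m) * INR K <= INR n) by (rewrite <- mult_INR; apply le_INR; exact hK).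
  replace (INR K) with (/ INR (S m) * (INR (S m) * INR K)) by (field; lra).
  apply Rmult_le_compat; [left; apply Rinv_0_lt_compat; lra|
    apply Rmult_le_pos; [lra|apply pos_INR]|exact He|exact Hn].
Qed.

Definition visit (m : nat) : nat := (m - Nat.sqrt m * Nat.sqrt m)%nat.

Lemma visit_infinitely_often (j M : nat) : exists m, (M <= m)%nat /\ visit m = j.
Proof.
  exists ((M + j + 1) * (M + j + 1) + j)%nat. split; [nia|].
  unfold visit. rewrite (Nat.sqrt_unique _ (M + j + 1)) by nia. lia.
Qed.

Section Coding.

Context {X : Type}.
Variables (d : X -> X -> R) (f : X -> X) (z : X) (r : R).
Variable st : nat -> nat -> Stage X.
Hypothesis st_ok : forall m p, stage_ok d f z r m p (st m p).
Hypothesis Hmetric : is_metric d.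

Definition slen (m p : nat) : nat := st_len (st m p).

Definition stage_at (m : nat) : Stage X := st m (start slen m).

Definition coded_block (s : nat -> bool) (m : nat) : nat -> X :=
  if s (visit m) then stU (stage_at m) else stV (stage_at m).

Definition coded_orbit (s : nat -> bool) : nat -> X := glue slen (coded_block s).

Lemma slen_pos (m p : nat) : (1 <= slen m p)%nat.
Proof. destruct (st_ok m p) as [_ [_ [h1 [h2 _]]]]. unfold slen. lia. Qed.

Lemma coded_block_chain (s : nat -> bool) (m : nat) :
  CR_chain d f (/ INR (S m)) (coded_block s m) (slen m (start slen m)) z z.
Proof.
  destruct (st_ok m (start slen m)) as [HU [HV _]].
  unfold coded_block, slen, stage_at. destruct (s (visit m)); assumption.
Qed.

Lemma coded_orbit_CR (s : nat -> bool) (i : nat) : CR d f (coded_orbit s i).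
Proof. exact (glue_CR slen slen_pos (coded_block s) d f z _ (coded_block_chain s) i). Qed.

(* The errors of the stages are 1/(m+1), so they tend to 0. *)
Lemma coded_orbit_pseudo (s : nat -> bool) :
  Un_cv (fun i => d (f (coded_orbit s i)) (coded_orbit s (S i))) 0.
Proof.
  intros eps He. destruct (inv_succ_small eps He) as [M HM].
  exists (start slen M). intros i hi. unfold Rdist. rewrite Rminus_0_r.
  rewrite Rabs_right by (apply Rle_ge, (proj1 Hmetric)).
  eapply Rle_lt_trans;
    [apply (glue_step slen slen_pos (coded_block s) d f z _ (coded_block_chain s))|].
  apply HM, block_index_large; [exact slen_pos|exact hi].
Qed.

Lemma start_stage_at (m : nat) :
  start slen (S m) = (start slen m + st_len (stage_at m))%nat.
Proof. reflexivity. Qed.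

Lemma start_ge (m : nat) : (m <= start slen m)%nat.
Proof. pose proof (start_grows slen slen_pos 0 m ltac:(lia)). simpl in *. lia. Qed.

Lemma coded_orbit_in (s : nat -> bool) (m i : nat) :
  (start slen m <= i < start slen m + st_len (stage_at m))%nat ->
  coded_orbit s i = coded_block s m (i - start slen m).
Proof. intro h. apply glue_in; [exact slen_pos|]. rewrite start_stage_at. exact h. Qed.

(* Any two coded pseudo-orbits agree on the initial segments of the stages. *)
Lemma coded_orbits_agree (s s' : nat -> bool) :
  long_windows (fun i => coded_orbit s i = coded_orbit s' i).
Proof.
  intros eps He N. destruct (inv_succ_small eps He) as [M HM].
  set (m := (N + M)%nat).
  destruct (st_ok m (start slen m)) as [_ [_ [[Ha Hab] [[Hbg Hgl] [Hpre [_ [Heq _]]]]]]].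
  change (st m (start slen m)) with (stage_at m) in *.
  exists (start slen m), (start slen m + st_agree (stage_at m))%nat. split; [|split].
  - pose proof (start_ge m). unfold m in *. lia.
  - apply (small_prefix _ _ m); [exact Hpre|left; apply HM; unfold m; lia].
  - intros i h1 h2. rewrite !(coded_orbit_in _ m) by lia.
    unfold coded_block. destruct (s (visit m)), (s' (visit m)); rewrite ?Heq by lia; reflexivity.
Qed.

(* If s and s' differ at j, the far windows of the stages m with visit m = j
   keep the two coded pseudo-orbits r apart. *)
Lemma coded_orbits_separate (s s' : nat -> bool) (j : nat) :
  s j <> s' j -> long_windows (fun i => d (coded_orbit s i) (coded_orbit s' i) > r).
Proof.
  intros Hj eps He N. destruct (inv_succ_small eps He) as [M HM].
  destruct (visit_infinitely_often j (N + M)) as [m [Hm Hvisit]].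
  destruct (st_ok m (start slen m)) as [_ [_ [[Ha Hab] [[Hbg Hgl] [_ [Hpre [_ Hfar]]]]]]].
  change (st m (start slen m)) with (stage_at m) in *.
  exists (start slen m + st_far_start (stage_at m))%nat,
    (start slen m + st_far_end (stage_at m))%nat.
  split; [|split].
  - pose proof (start_ge m). lia.
  - apply (small_prefix _ _ m); [exact Hpre|left; apply HM; lia].
  - intros i h1 h2. rewrite !(coded_orbit_in _ m) by lia.
    assert (H := Hfar (i - start slen m)%nat ltac:(lia)).
    unfold coded_block. rewrite Hvisit.
    destruct (s j), (s' j); try (exfalso; apply Hj; reflexivity); [exact H|].
    destruct Hmetric as [_ [_ [Hsym _]]]. rewrite Hsym. exact H.
Qed.

End Coding.

Lemma bool_sequences_uncountable (g : (nat -> bool) -> nat) :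
  ~ (forall s s', g s = g s' -> s = s').
Proof.
  intro Hinj.
  assert (Hsec : exists F : nat -> nat -> bool,
             forall n, (exists s, g s = n) -> g (F n) = n).
  { apply (functional_choice (fun n s => (exists s0, g s0 = n) -> g s = n)). intro n.
    destruct (classic (exists s, g s = n)) as [[s Hs]|Hn].
    - exists s. intros _. exact Hs.
    - exists (fun _ => false). intro H. contradiction. }
  destruct Hsec as [F HF].
  set (diag := fun n => negb (F n n)).
  assert (E : F (g diag) = diag) by (apply Hinj, HF; eauto).
  assert (E2 : diag (g diag) = negb (F (g diag) (g diag))) by reflexivity.
  rewrite E in E2. destruct (diag (g diag)); discriminate.
Qed.

Lemma bool_sequences_differ (s s' : nat -> bool) : s <> s' -> exists j, s j <> s' j.
Proof.
  intro hne. apply NNPP. intro hn. apply hne, functional_extensionality. intro j.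
  apply NNPP. intro hj. apply hn. eauto.
Qed.

Theorem lemma4p1 (X : Type) (d : X -> X -> R) (f : X -> X)
  (Hmet : is_metric d) (Hcpt : compact_space d) (Hcont : continuous_map d f)
  (H1 : exists z w, CR d f z /\ CR d f w /\ CR_sim d f z w /\ property_star d f z w)
  (H2 : forall xs : nat -> X,
          (forall i, CR d f (xs i)) ->
          Un_cv (fun i => d (f (xs i)) (xs (S i))) 0 ->
          exists x, Un_cv (fun n => sum_lt (fun i => d (iter f i x) (xs i)) n / INR n) 0) :
  exhibits_DC1 d f.
Proof.
  destruct H1 as [z [w [_ [_ [Hsim [r [Hr Hsep]]]]]]].
  assert (Hstages : exists st : nat -> nat -> Stage X, forall m p, stage_ok d f z r m p (st m p)).
  { apply (functional_choice (fun m stm => forall p, stage_ok d f z r m p (stm p))). intro m.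
    apply (functional_choice (fun p D => stage_ok d f z r m p D)). intro p.
    exact (stage_exists d f z w r m p Hsim Hsep). }
  destruct Hstages as [st Hst].
  assert (Hshadow : exists x : (nat -> bool) -> X, forall s,
             cesaro_null (fun i => d (iter f i (x s)) (coded_orbit st s i))).
  { apply (functional_choice (fun s y =>
             cesaro_null (fun i => d (iter f i y) (coded_orbit st s i)))).
    intro s. apply H2.
    - exact (coded_orbit_CR d f z r st Hst s).
    - exact (coded_orbit_pseudo d f z r st Hst Hmet s). }
  destruct Hshadow as [x Hx].
  assert (Hdc : forall s s', s <> s' -> DC1_pair d f (x s) (x s')).
  { intros s s' hne. destruct (bool_sequences_differ s s' hne) as [j hj].
    apply (DC1_pair_of_shadowing d f _ _ _ _ r Hmet Hr (Hx s) (Hx s')).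
    - exact (coded_orbits_agree d f z r st Hst s s').
    - exact (coded_orbits_separate d f z r st Hst Hmet s s' j hj). }
  exists (fun y => exists s, y = x s). split.
  - intros [h Hh]. apply (bool_sequences_uncountable (fun s => h (x s))). intros s s' e.
    apply NNPP. intro hne. apply (DC1_pair_distinct d f _ _ Hmet (Hdc s s' hne)).
    apply Hh; eauto.
  - intros y y' [s ->] [s' ->] hne. apply Hdc. intro e. apply hne. now rewrite e.
Qed.
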